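(* The optimal profile $\mathbf{a}^{*}$ lies in $\mathcal{D}(B):=\{\mathbf{a}\in (0,p_{1})\times \ldots \times (0,p_{K}): \sum_{k=1}^{K}c_{k}a_{k} \leq B \}$, i.e., no coordinate $a^{*}_k$ lies on the natural boundary $\{0,p_k\}$.
   Context: Let $V$ be a set of $n$ vertices and let the $\binom{n}{2}$ possible edges be partitioned into $K$ parts $\mathcal{P}_1,\ldots,\mathcal{P}_K$, where every edge in part $k$ has cost $c_k$ with $0<c_k<\infty$. Let $P_k=|\mathcal{P}_k|$ and $p_k=P_k/n$ (the average number of possible edges of part $k$ per vertex). For a budget $B\ge 0$, consider the optimization problem $(\Lambda)$: maximize $H(\mathbf{a}) = - \sum_{k=1}^{K} \left[(p_{k}-a_{k})\log(p_{k}-a_{k})+a_{k}\log(a_{k})\right]$ over $\mathbf{a}=(a_1,\ldots,a_K)$ subject to $\sum_{k=1}^{K}a_{k}c_{k} \leq B$ and $0\leq a_{k} \leq p_{k}$ for all $k\in[K]$. Let $\mathbf{a}^{*}=\mathbf{a}^{*}(B)$ denote its solution. *)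

(* R : realType, ln from mathcomp-analysis (ln 0 = 0, so 0*ln 0 = 0). *)
From HB Require Import structures.
From mathcomp Require Import all_boot all_order all_algebra.
From mathcomp Require Import reals exp.
Set Implicit Arguments. Unset Strict Implicit. Unset Printing Implicit Defensive.
Import Order.TTheory GRing.Theory Num.Theory.
Local Open Scope ring_scope.

Definition pk {R : realType} (n : nat) {K : nat} (P : 'I_K -> nat) (k : 'I_K) : R :=
  (P k)%:R / n%:R.

Definition Hent {R : realType} {K : nat} (p a : 'I_K -> R) : R :=
  - \sum_(k < K) ((p k - a k) * ln (p k - a k) + a k * ln (a k)).

Definition feasible {R : realType} {K : nat} (p c : 'I_K -> R) (B : R)
  (a : 'I_K -> R) : Prop :=
  \sum_(k < K) a k * c k <= B /\ (forall k, 0 <= a k <= p k).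

Definition is_solution {R : realType} {K : nat} (p c : 'I_K -> R) (B : R)
  (a : 'I_K -> R) : Prop :=
  feasible p c B a /\ (forall b, feasible p c B b -> Hent p b <= Hent p a).

Definition inD {R : realType} {K : nat} (p c : 'I_K -> R) (B : R)
  (a : 'I_K -> R) : Prop :=
  (forall k, 0 < a k < p k) /\ \sum_(k < K) c k * a k <= B.

(** If some a_k sat on the boundary of [0, p_k], a feasible perturbation would
    strictly increase the entropy.  At a_k = p_k, moving a_k down to p_k/2
    saves budget and gains p_k ln 2.  At a_k = 0, the term -x ln x has infinite
    slope: raising a_k by a small s gains about s ln(1/s), which beats any
    linear cost.  That cost is paid either from the slack in the budget or, if
    the budget is tight (hence some a_j > 0, as B > 0), by lowering a_j by
    s c_k / c_j, which loses only O(s) entropy because a_j stays away from 0. *)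
From mathcomp Require Import all_boot all_order all_algebra.
From mathcomp Require Import reals exp.
From mathcomp Require Import ring lra.
Set Implicit Arguments. Unset Strict Implicit. Unset Printing Implicit Defensive.
Import Order.TTheory GRing.Theory Num.Theory.
Local Open Scope ring_scope.

Lemma sum_dfwith (I : finType) (T : Type) (V : zmodType) (F : I -> T -> V)
    (a : I -> T) (k : I) (x : T) :
  \sum_i F i (dfwith a (i := k) x i) = \sum_i F i (a i) + (F k x - F k (a k)).
Proof.
rewrite (bigD1 k) //= [in RHS](bigD1 k) //= dfwith_in.
rewrite (eq_bigr (fun i => F i (a i))); last by move=> i ik; rewrite dfwith_out // eq_sym.
by rewrite [RHS]addrC addrA addrNK.
Qed.

Section BinaryNegentropy.
Variable R : realType.

Definition bin_negent (p x : R) := (p - x) * ln (p - x) + x * ln x.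

Lemma bin_negent_half_lt (p : R) : 0 < p -> bin_negent p (p / 2) < bin_negent p p.
Proof.
move=> p_gt0; rewrite /bin_negent subrr mul0r add0r.
have -> : p - p / 2 = p / 2 by field.
rewrite ln_div ?posrE //.
have : 0 < p * ln 2 by rewrite mulr_gt0 // ln_gt0 //; lra.
lra.
Qed.

Lemma bin_negent_gain0 (p s : R) : 0 < s -> s < p ->
  s * (ln p - ln s) <= bin_negent p 0 - bin_negent p s.
Proof.
move=> s_gt0 s_lt_p; rewrite /bin_negent subr0 mul0r addr0.
have : ln (p - s) <= ln p by rewrite ler_ln ?posrE; lra.
have : 0 <= p - s by lra.
nra.
Qed.

(* The quantity ln p - ln s in [bin_negent_gain0] is unbounded as s -> 0. *)
Lemma bin_negent_steep0 (p L m : R) : 0 < p -> 0 < m ->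
  exists s, [/\ 0 < s, s <= m, s < p & s * L < bin_negent p 0 - bin_negent p s].
Proof.
move=> p_gt0 m_gt0.
pose s := Order.min (Order.min m (p / 2)) (sequences.expR (ln p - L - 1)).
have s_gt0 : 0 < s by rewrite !lt_min m_gt0 expR_gt0 andbT; lra.
have s_le : s <= Order.min m (p / 2) by rewrite ge_min lexx.
have ln_s : ln s <= ln p - L - 1.
  by rewrite -[X in _ <= X]expRK ler_ln ?posrE ?expR_gt0 // ge_min lexx orbT.
move: s_le; rewrite le_min => /andP[s_le_m s_le_p].
have s_lt_p : s < p by lra.
exists s; split => //.
have := bin_negent_gain0 s_gt0 s_lt_p.
have : s * (L + 1) <= s * (ln p - ln s) by rewrite ler_pM2l //; lra.
lra.
Qed.

Lemma xlnx_increment_le (u v : R) : 0 <= u -> 0 < v ->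
  (u + v) * ln (u + v) - u * ln u <= v + v * ln (u + v).
Proof.
move=> u_ge0 v_gt0; have [->|u_neq0] := eqVneq u 0.
  by rewrite mul0r subr0 add0r; lra.
have u_gt0 : 0 < u by rewrite lt_neqAle eq_sym u_neq0.
have ln_quot : ln (u + v) - ln u <= v / u.
  rewrite -ln_div ?posrE; try lra.
  have -> : (u + v) / u = 1 + v / u by field; lra.
  have : 0 < v / u by apply: divr_gt0.
  by move=> ?; apply: le_ln1Dx; lra.
have : u * (ln (u + v) - ln u) <= u * (v / u) by rewrite ler_pM2l.
have -> : u * (v / u) = v by field; lra.
lra.
Qed.

Lemma bin_negent_loss (p x d : R) : 0 < d -> 2 * d <= x -> x <= p ->
  bin_negent p (x - d) - bin_negent p x <= d * (1 + p - ln x).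
Proof.
move=> d_gt0 x_ge x_le_p; rewrite /bin_negent.
have -> : p - (x - d) = (p - x) + d by ring.
have px_ge0 : 0 <= p - x by lra.
have := xlnx_increment_le px_ge0 d_gt0.
have pxd_gt0 : 0 < p - x + d by lra.
have ln_le_p : ln (p - x + d) <= p by have := ln_sublinear pxd_gt0; lra.
have ln_le : ln (x - d) <= ln x by rewrite ler_ln ?posrE; lra.
have : (x - d) * ln (x - d) <= (x - d) * ln x by rewrite ler_wpM2l //; lra.
have : d * ln (p - x + d) <= d * p by rewrite ler_pM2l.
nra.
Qed.

End BinaryNegentropy.

Section SolutionInterior.
Variables (R : realType) (K : nat) (p c : 'I_K -> R) (B : R) (a : 'I_K -> R).
Hypotheses (p_gt0 : forall k, 0 < p k) (c_gt0 : forall k, 0 < c k).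
Hypothesis a_sol : is_solution p c B a.

Local Notation cost b := (\sum_(i < K) b i * c i).
Local Notation negent b := (\sum_(i < K) bin_negent (p i) (b i)).

Lemma solution_negent_min b : feasible p c B b -> negent b < negent a -> False.
Proof. by move=> /a_sol.2; rewrite /Hent lerN2 leNgt => /negP. Qed.

Lemma box_dfwith b k x : (forall i, 0 <= b i <= p i) -> 0 <= x <= p k ->
  forall i, 0 <= dfwith b (i := k) x i <= p i.
Proof. by move=> b_box x_box i; case: dfwithP. Qed.

Lemma solution_lt_cap k : a k < p k.
Proof.
have [a_budget a_box] := a_sol.1; have pk_gt0 := p_gt0 k.
rewrite lt_neqAle (andP (a_box k)).2 andbT; apply/eqP => a_top.
apply: (solution_negent_min (b := dfwith a (i := k) (p k / 2))).
  split; last by apply: box_dfwith => //; apply/andP; split; lra.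
  rewrite (sum_dfwith (fun i y => y * c i)) a_top.
  have : p k / 2 * c k <= p k * c k by rewrite ler_pM2r //; lra.
  lra.
rewrite (sum_dfwith (fun i y => bin_negent (p i) y)) a_top.
by have := bin_negent_half_lt pk_gt0; lra.
Qed.

Lemma solution_gt0_of_slack k : cost a < B -> 0 < a k.
Proof.
move=> slack; have [_ a_box] := a_sol.1; have ck_gt0 := c_gt0 k.
rewrite lt_neqAle (andP (a_box k)).1 andbT; apply/eqP => a_bot.
have room : 0 < (B - cost a) / c k by rewrite divr_gt0 ?subr_gt0.
have [s [s_gt0 s_le s_lt gain]] := bin_negent_steep0 0 (p_gt0 k) room.
apply: (solution_negent_min (b := dfwith a (i := k) s)).
  split; last by apply: box_dfwith => //; apply/andP; split; lra.
  rewrite (sum_dfwith (fun i y => y * c i)) -a_bot mul0r subr0.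
  have : s * c k <= (B - cost a) / c k * c k by rewrite ler_pM2r.
  by rewrite divfK ?gt_eqF //; lra.
by rewrite (sum_dfwith (fun i y => bin_negent (p i) y)) -a_bot; lra.
Qed.

(* Budget is moved from coordinate j to coordinate k at the exchange rate
   r = c_j / c_k, so the cost is unchanged. *)
Lemma solution_gt0_of_gt0 j k : 0 < a j -> 0 < a k.
Proof.
move=> aj_gt0; have [a_budget a_box] := a_sol.1.
have ck_gt0 := c_gt0 k; have cj_gt0 := c_gt0 j; have aj_le := (andP (a_box j)).2.
rewrite lt_neqAle (andP (a_box k)).1 andbT; apply/eqP => a_bot.
have jk : k != j by apply/eqP => kj; move: aj_gt0; rewrite -kj -a_bot ltxx.
pose r := c j / c k; have r_gt0 : 0 < r by apply: divr_gt0.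
pose L := 1 + p j - ln (a j).
have [s [s_gt0 s_le s_lt gain]] :=
  bin_negent_steep0 (L / r) (p_gt0 k) (divr_gt0 (mulr_gt0 r_gt0 aj_gt0) (ltr0Sn _ 1)).
pose d := s / r; have d_gt0 : 0 < d by apply: divr_gt0.
have s_eq : s = r * d by rewrite /d mulrC divfK ?gt_eqF.
have d_le : 2 * d <= a j.
  have : r * d <= r * (a j / 2) by rewrite -s_eq mulrA.
  by rewrite ler_pM2l //; lra.
have loss := bin_negent_loss d_gt0 d_le aj_le.
apply: (solution_negent_min (b := dfwith (dfwith a (i := k) s) (i := j) (a j - d))).
  split; last by do 2?[apply: box_dfwith] => //; apply/andP; split; lra.
  rewrite !(sum_dfwith (fun i y => y * c i)) dfwith_out // -a_bot s_eq /r.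
  suff -> : c j / c k * d * c k = d * c j by lra.
  by field; rewrite gt_eqF.
rewrite !(sum_dfwith (fun i y => bin_negent (p i) y)) dfwith_out // -a_bot.
suff : s * (L / r) = d * L by rewrite /L in gain *; lra.
by rewrite s_eq; field; rewrite gt_eqF.
Qed.

Lemma solution_gt0 k : 0 < B -> 0 < a k.
Proof.
move=> B_gt0; have [_ a_box] := a_sol.1.
have [/existsP[j aj_gt0]|no_pos] := boolP [exists j, 0 < a j].
  exact: solution_gt0_of_gt0 aj_gt0.
apply: solution_gt0_of_slack; rewrite big1 // => i _.
have /andP[ai_ge0 _] := a_box i.
suff -> : a i = 0 by rewrite mul0r.
apply/eqP; rewrite eq_le ai_ge0 andbT leNgt.
by apply: contraNN no_pos => ai_gt0; apply/existsP; exists i.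
Qed.

End SolutionInterior.

Theorem lemma1 (R : realType) (n K : nat) (P : 'I_K -> nat) (c : 'I_K -> R) (B : R)
  (a : 'I_K -> R) :
  (0 < n)%N ->
  (\sum_(k < K) P k)%N = 'C(n, 2) ->
  (forall k, (0 < P k)%N) ->
  (forall k, 0 < c k) ->
  0 < B ->
  is_solution (pk n P) c B a ->
  inD (pk n P) c B a.
Proof.
(* Only the positivity of the p_k matters, not that the parts cover all edges. *)
move=> n_gt0 _ P_gt0 c_gt0 B_gt0 a_sol.
have p_gt0 k : 0 < pk (R := R) n P k by rewrite /pk divr_gt0 // ltr0n.
split=> [k|].
  by rewrite (solution_gt0 p_gt0 c_gt0 a_sol) // (solution_lt_cap p_gt0 c_gt0 a_sol).
by rewrite (eq_bigr (fun k => a k * c k)) ?a_sol.1.1 // => k _; rewrite mulrC.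
Qed.
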